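(* Let $\mathbf{P}=(\mathbf{P}^{(0)},\mathbf{P}^{(1)},\ldots,\mathbf{P}^{(K_1)})$ be a $(K_1,K_2;F;Z_1,Z_2;\mathcal{S}_\mathrm{m},\mathcal{S}_1,\ldots,\mathcal{S}_{K_1})$ HPDA. Then for every $N\ge K_1K_2$ there exists an $F$-division coded caching scheme with uncoded placement for the $(K_1,K_2;M_1,M_2;N)$ hierarchical caching system with $$\frac{M_1}{N}=\frac{Z_1}{F},\qquad \frac{M_2}{N}=\frac{Z_2}{F},$$ and transmission loads $$R_1=\frac{\left|\bigcup_{k_1=1}^{K_1}\mathcal{S}_{k_1}\right|-|\mathcal{S}_\mathrm{m}|}{F},\qquad R_2=\max_{k_1\in[K_1]}\frac{|\mathcal{S}_{k_1}|}{F}.$$ In this scheme mirror site $k_1$ caches packet $W_{n,j}$ of every file iff $p^{(0)}_{j,k_1}=*$, and user $U_{k_1,k_2}$ caches $W_{n,j}$ of every file iff $p^{(k_1)}_{j,k_2}=*$.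
   Context: Notation: $[a]=\{1,\ldots,a\}$, $[a:b]=\{a,\ldots,b\}$. PDA. For positive integers $K,F,Z,S$ and an integer set $\mathcal{S}$ with $|\mathcal{S}|=S$, an $F\times K$ array $\mathbf{Q}=(q_{j,k})$ with entries in $\{*\}\cup\mathcal{S}$ is a $(K,F,Z,S)$ placement delivery array (PDA) (over $\mathcal{S}$; by default $\mathcal{S}=[S]$) if: (C1) the symbol $*$ appears exactly $Z$ times in each column; (C2) each integer of $\mathcal{S}$ occurs at least once in the array; (C3) for two distinct entries $q_{j_1,k_1}=q_{j_2,k_2}=s$ with $s$ an integer, we have $j_1\ne j_2$, $k_1\ne k_2$, and $q_{j_1,k_2}=q_{j_2,k_1}=*$. HPDA. Let $K_1,K_2,F,Z_1,Z_2$ be positive integers with $Z_1<F$, $Z_2<F$, and let $\mathcal{S}_\mathrm{m},\mathcal{S}_1,\ldots,\mathcal{S}_{K_1}$ be sets of integers. An $F\times(K_1+K_1K_2)$ array $\mathbf{P}=(\mathbf{P}^{(0)},\mathbf{P}^{(1)},\ldots,\mathbf{P}^{(K_1)})$, where $\mathbf{P}^{(0)}=(p^{(0)}_{j,k_1})_{j\in[F],k_1\in[K_1]}$ has every entry equal to $*$ or to ''null'' (blank), and for each $k_1\in[K_1]$, $\mathbf{P}^{(k_1)}=(p^{(k_1)}_{j,k_2})_{j\in[F],k_2\in[K_2]}$ has entries in $\{*\}\cup\mathcal{S}_{k_1}$, is a $(K_1,K_2;F;Z_1,Z_2;\mathcal{S}_\mathrm{m},\mathcal{S}_1,\ldots,\mathcal{S}_{K_1})$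 hierarchical placement delivery array (HPDA) if: (B1) each column of $\mathbf{P}^{(0)}$ contains exactly $Z_1$ stars; (B2) for each $k_1\in[K_1]$, $\mathbf{P}^{(k_1)}$ is a $(K_2,F,Z_2,|\mathcal{S}_{k_1}|)$ PDA over $\mathcal{S}_{k_1}$; (B3) each integer $s\in\mathcal{S}_\mathrm{m}$ occurs in exactly one of the subarrays $\mathbf{P}^{(1)},\ldots,\mathbf{P}^{(K_1)}$, and whenever $p^{(k_1)}_{j,k_2}=s\in\mathcal{S}_\mathrm{m}$ we have $p^{(0)}_{j,k_1}=*$; (B4) for any $k_1\ne k_1'\in[K_1]$, $j,j'\in[F]$, $k_2,k_2'\in[K_2]$ with $p^{(k_1)}_{j,k_2}=p^{(k_1')}_{j',k_2'}$ an integer: if $p^{(k_1)}_{j',k_2}$ is an integer then $p^{(0)}_{j',k_1}=*$; and if $p^{(k_1')}_{j,k_2'}$ is an integer then $p^{(0)}_{j,k_1'}=*$. Hierarchical caching model $(K_1,K_2;M_1,M_2;N)$. A server stores $N$ independent files $W_1,\ldots,W_N$, each uniformly distributed on $B$ bits. There are $K_1$ mirror sites, each with a cache of $M_1B$ bits, and $K_1K_2$ users $U_{k_1,k_2}$ ($k_1\in[K_1]$, $k_2\in[K_2]$), each with a cache of $M_2B$ bits; user $U_{k_1,k_2}$ is attached to mirror site $k_1$. The server reaches all mirror sites through one error-free broadcast link; mirror site $k_1$ reaches its $K_2$ attached users through an error-free broadcast link. An $F$-division scheme with uncoded placement ($F\mid B$): each file $W_n$ is split into $F$ packets $W_{n,1},\ldots,W_{n,F}$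 of $B/F$ bits. In the placement phase (without knowledge of demands) mirror site $k_1$ stores a set $\mathcal{Z}_{k_1}$ of packets of total size at most $M_1B$ bits and user $U_{k_1,k_2}$ stores a set $\mathcal{Z}_{(k_1,k_2)}$ of packets of total size at most $M_2B$ bits. In the delivery phase, given a demand vector $\mathbf{d}=(d_{k_1,k_2})\in[N]^{K_1K_2}$, the server broadcasts to the mirror sites a message $X$ consisting of $S(\mathbf{d})$ packet-sized symbols, a function of the files and $\mathbf{d}$; each mirror site $k_1$ broadcasts to its attached users a message $X_{k_1}$ of $S_{k_1}(\mathbf{d})$ packet-sized symbols, a function of $X$, $\mathcal{Z}_{k_1}$ and $\mathbf{d}$; each user $U_{k_1,k_2}$ must recover $W_{d_{k_1,k_2}}$ from $X_{k_1}$, $\mathcal{Z}_{(k_1,k_2)}$ and $\mathbf{d}$. The loads are $R_1=\max_{\mathbf{d}}S(\mathbf{d})/F$ and $R_2=\max_{k_1,\mathbf{d}}S_{k_1}(\mathbf{d})/F$. *)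

From HB Require Import structures.
From mathcomp Require Import all_boot all_order all_algebra.
From mathcomp Require Import finmap.
Set Implicit Arguments. Unset Strict Implicit. Unset Printing Implicit Defensive.
Import Order.TTheory GRing.Theory Num.Theory.

Local Open Scope fset_scope.

(* An entry of a (H)PDA subarray: [None] is the symbol *, [Some s] the integer s. *)

Definition is_PDA (K F Z : nat) (Sset : {fset int})
    (Q : 'I_F -> 'I_K -> option int) : Prop :=
  [/\ (0 < K)%N, (0 < F)%N, (0 < Z)%N & (0 < #|` Sset|)%N] /\
  (forall j k s, Q j k = Some s -> s \in Sset) /\
  (forall k : 'I_K, #|[set j : 'I_F | Q j k == None]| = Z) /\
  (forall s, s \in Sset -> exists j k, Q j k = Some s) /\
  (* C3 *)
  (forall (j1 j2 : 'I_F) (k1 k2 : 'I_K) (s : int),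
      Q j1 k1 = Some s -> Q j2 k2 = Some s -> (j1, k1) != (j2, k2) ->
      [/\ j1 != j2, k1 != k2, Q j1 k2 = None & Q j2 k1 = None]).

(* (K1,K2;F;Z1,Z2;Sm,S_1,...,S_K1) hierarchical placement delivery array.
   P0 j k1 = true means p^(0)_{j,k1} = *, false means "null".
   P k1 j k2 = p^(k1)_{j,k2}. *)
Definition is_HPDA (K1 K2 F Z1 Z2 : nat) (Sm : {fset int})
    (Ss : 'I_K1 -> {fset int}) (P0 : 'I_F -> 'I_K1 -> bool)
    (P : 'I_K1 -> 'I_F -> 'I_K2 -> option int) : Prop :=
  [/\ (0 < K1)%N, (0 < K2)%N, (0 < F)%N, (0 < Z1)%N & (0 < Z2)%N] /\
  (Z1 < F)%N /\ (Z2 < F)%N /\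
  (forall k1 : 'I_K1, #|[set j : 'I_F | P0 j k1]| = Z1) /\
  (forall k1 : 'I_K1, is_PDA Z2 (Ss k1) (P k1)) /\
  (* B3 *)
  (forall s, s \in Sm -> exists! k1 : 'I_K1, exists j k2, P k1 j k2 = Some s) /\
  (forall k1 j k2 s, P k1 j k2 = Some s -> s \in Sm -> P0 j k1) /\
  (* B4 *)
  (forall (k1 k1' : 'I_K1) (j j' : 'I_F) (k2 k2' : 'I_K2) (s : int),
      k1 != k1' -> P k1 j k2 = Some s -> P k1' j' k2' = Some s ->
      ((exists t, P k1 j' k2 = Some t) -> P0 j' k1) /\
      ((exists t, P k1' j k2' = Some t) -> P0 j k1')).

(* A packet: B/F bits (L = B/F). *)
Definition packet (L : nat) := 'rV['F_2]_L.

Definition files (N F L : nat) := 'I_N -> 'I_F -> packet L.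

Definition demand (K1 K2 N : nat) := {ffun 'I_K1 * 'I_K2 -> 'I_N}.

Definition agree_on (N F L : nat) (Z : {set 'I_N * 'I_F}) (W W' : files N F L) :=
  forall p, p \in Z -> W p.1 p.2 = W' p.1 p.2.

Record hscheme (K1 K2 N F L : nat) := HScheme {
  ZM : 'I_K1 -> {set 'I_N * 'I_F};
  ZU : 'I_K1 -> 'I_K2 -> {set 'I_N * 'I_F};
  S1 : demand K1 K2 N -> nat;
  S2 : 'I_K1 -> demand K1 K2 N -> nat;
  enc : forall d, files N F L -> 'I_(S1 d) -> packet L;
  (* mirror message X_{k1}, from X, the mirror cache (via files) and d *)
  mir : forall k1 d, ('I_(S1 d) -> packet L) -> files N F L ->
                     'I_(S2 k1 d) -> packet L;
  (* decoder of user U_{k1,k2}, from X_{k1}, its cache (via files) and d *)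
  dec : forall (k1 : 'I_K1) (k2 : 'I_K2) d, ('I_(S2 k1 d) -> packet L) -> files N F L ->
                        'I_F -> packet L
}.

Arguments enc {K1 K2 N F L} h d W _.
Arguments mir {K1 K2 N F L} h k1 d X W _.
Arguments dec {K1 K2 N F L} h k1 k2 d Y W _.

Local Open Scope ring_scope.

(* Validity: memory constraints (in bits, B = F*L), dependence of mirror
   messages / decoders only on the respective cache contents, and
   zero-error recovery of the requested file for every realization of the
   files (files are uniform, so recovery w.p. 1 = recovery for all
   realizations). *)
Definition valid_hscheme (K1 K2 N F L : nat) (M1 M2 : rat)
    (sc : hscheme K1 K2 N F L) : Prop :=
  (forall k1, ((#|ZM sc k1| * L)%N%:R : rat) <= M1 * (F * L)%N%:R) /\
  (forall k1 k2, ((#|ZU sc k1 k2| * L)%N%:R : rat) <= M2 * (F * L)%N%:R) /\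
  (forall k1 d X W W', agree_on (ZM sc k1) W W' ->
       mir sc k1 d X W = mir sc k1 d X W') /\
  (forall k1 k2 d Y W W', agree_on (ZU sc k1 k2) W W' ->
       dec sc k1 k2 d Y W = dec sc k1 k2 d Y W') /\
  (forall d (W : files N F L) k1 k2 j,
       dec sc k1 k2 d (mir sc k1 d (enc sc d W) W) W j = W (d (k1, k2)) j).

Definition load1 (K1 K2 N F L : nat) (sc : hscheme K1 K2 N F L) : rat :=
  (\max_(d : demand K1 K2 N) S1 sc d)%N%:R / F%:R.
Definition load2 (K1 K2 N F L : nat) (sc : hscheme K1 K2 N F L) : rat :=
  (\max_(k1 : 'I_K1) \max_(d : demand K1 K2 N) S2 sc k1 d)%N%:R / F%:R.

From HB Require Import structures.
From mathcomp Require Import all_boot all_order all_algebra.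
From mathcomp Require Import finmap.
From Stdlib Require Import FunctionalExtensionality.
From mathcomp Require Import ring.
Import Order.TTheory GRing.Theory Num.Theory.
Set Implicit Arguments. Unset Strict Implicit. Unset Printing Implicit Defensive.
Local Open Scope ring_scope.

(* The server sends, for every integer s of the union of the S_k1 outside S_m,
   the sum X_s of all packets demanded at the positions of P labelled s.
   Mirror k1 strips from X_s the summands it caches (p^(0) = * outside its own
   subarray), and computes the sums for the symbols of S_m, which by B3 live
   in one subarray only and are entirely cached there.  A user at an entry s
   of P^(k1) then cancels the remaining summands: those of its own subarray by
   C3 and those of other subarrays, uncached at the mirror, by B4. *)

Lemma bigmax_nat_const (T : finType) (x : T) (c : nat) : (\max_(i : T) c)%N = c.
Proof.
apply/eqP; rewrite eqn_leq; apply/andP; split; first exact/bigmax_leqP.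
exact: (@leq_bigmax_cond T predT (fun _ => c) x).
Qed.

Lemma card_set_snd (T1 T2 : finType) (f : pred T2) :
  #|[set p : T1 * T2 | f p.2]| = (#|T1| * #|[set j | f j]|)%N.
Proof.
have -> : [set p : T1 * T2 | f p.2] = setX [set: T1] [set j | f j].
  by apply/setP => -[x y]; rewrite !inE.
by rewrite cardsX cardsT.
Qed.

Lemma cache_bits_eq (M : rat) (N F Z L : nat) : (0 < N)%N -> (0 < F)%N ->
  M / N%:R = Z%:R / F%:R -> (N * Z * L)%N%:R = M * (F * L)%N%:R.
Proof.
move=> N_gt0 F_gt0 eqM.
have N0 : (N%:R : rat) != 0 by rewrite pnatr_eq0 -lt0n.
have F0 : (F%:R : rat) != 0 by rewrite pnatr_eq0 -lt0n.
have -> : M = Z%:R / F%:R * N%:R by rewrite -eqM divfK.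
by rewrite !natrM; field.
Qed.

Section Lookup.
Variable V : nmodType.

(* The component of a message [X] indexed by the enumeration [e] of its symbols. *)
Definition lookup (e : seq int) n (X : 'I_n -> V) (s : int) : V :=
  \sum_(i : 'I_n | nth 0 e i == s) X i.

Lemma lookup_nth (e : seq int) (X : 'I_(size e) -> V) (f : int -> V) s :
  uniq e -> s \in e -> (forall i, X i = f (nth 0 e i)) -> lookup e X s = f s.
Proof.
move=> e_uniq se eqX; have s_lt : (index s e < size e)%N by rewrite index_mem.
rewrite /lookup (eq_bigl (pred1 (Ordinal s_lt))); last first.
  move=> i /=; apply/eqP/eqP => [eq_s|->]; last by rewrite /= nth_index.
  by apply: val_inj; rewrite /= -eq_s index_uniq.
by rewrite big_pred1_eq eqX nth_index.
Qed.

End Lookup.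

Section HPDAScheme.
Variables (K1 K2 F Z1 Z2 N L : nat) (Sm : {fset int}) (Ss : 'I_K1 -> {fset int}).
Variables (P0 : 'I_F -> 'I_K1 -> bool) (P : 'I_K1 -> 'I_F -> 'I_K2 -> option int).
Hypothesis hpda : is_HPDA Z1 Z2 Sm Ss P0 P.

Definition symbols : {fset int} := (\big[fsetU/fset0]_(k1 < K1) Ss k1)%fset.

Lemma hpda_entry_mem k1 j k2 s : P k1 j k2 = Some s -> s \in Ss k1.
Proof. by have [_ [_ [_ [_ [/(_ k1) [_ [entry_mem _]] _]]]]] := hpda; apply: entry_mem. Qed.

Lemma mem_symbols k1 s : s \in Ss k1 -> s \in symbols.
Proof. by move=> sS; rewrite /symbols (bigD1 k1) //= in_fsetU sS. Qed.

Lemma hpda_Sm_subset : (Sm `<=` symbols)%fset.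
Proof.
have [_ [_ [_ [_ [_ [Sm_once _]]]]]] := hpda.
apply/fsubsetP => s /Sm_once [k1 [[j [k2 /hpda_entry_mem sS]] _]].
exact: mem_symbols sS.
Qed.

Lemma hpda_Sm_subarray k1 k1' j k2 s :
  s \in Sm -> s \in Ss k1 -> P k1' j k2 = Some s -> k1' = k1.
Proof.
have [_ [_ [_ [_ [/(_ k1) [_ [_ [_ [occurs _]]]] [Sm_once _]]]]]] := hpda.
move=> /Sm_once [k [_ k_uniq]] /occurs [j1 [k21 Pk1]] Pk1'.
have <- : k = k1 by apply: k_uniq; exists j1, k21.
by apply/esym/k_uniq; exists j, k2.
Qed.

Lemma hpda_interference_cached k1 k1' j j' k2 k2' s :
  P k1 j k2 = Some s -> P k1' j' k2' = Some s ->
  (k1' == k1) || ~~ P0 j' k1 -> (k1', j', k2') != (k1, j, k2) ->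
  P k1 j' k2 = None.
Proof.
have [_ [_ [_ [_ [/(_ k1) [_ [_ [_ [_ C3]]]] [_ [_ B4]]]]]]] := hpda.
move=> Pk1; have [-> Pk1' _ ne_jk | ne_k1 Pk1' /= notP0 _] := eqVneq k1' k1.
  have ne : (j, k2) != (j', k2') by apply: contra ne_jk => /eqP [-> ->].
  by have [_ _ _ ->] := C3 j j' k2 k2' s Pk1 Pk1' ne.
have k1_ne : k1 != k1' by rewrite eq_sym.
have [cached _] := B4 k1 k1' j j' k2 k2' s k1_ne Pk1 Pk1'.
case E : (P k1 j' k2) => [t|] //.
by move: notP0; rewrite cached //; exists t.
Qed.

Definition entry (t : 'I_K1 * 'I_F * 'I_K2) := P t.1.1 t.1.2 t.2.

Definition wanted (d : demand K1 K2 N) (W : files N F L)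
    (t : 'I_K1 * 'I_F * 'I_K2) : packet L :=
  W (d (t.1.1, t.2)) t.1.2.

(* Positions whose packet mirror k1 cannot remove from a server sum. *)
Definition mirror_keeps (k1 : 'I_K1) (t : 'I_K1 * 'I_F * 'I_K2) :=
  (t.1.1 == k1) || ~~ P0 t.1.2 k1.

Definition coded_sum d W s : packet L :=
  \sum_(t | entry t == Some s) wanted d W t.

Definition mirror_sum k1 d W s : packet L :=
  \sum_(t | (entry t == Some s) && mirror_keeps k1 t) wanted d W t.

Definition server_symbols : seq int := enum_fset (symbols `\` Sm)%fset.

Definition mirror_symbols k1 : seq int := enum_fset (Ss k1).

Definition server_msg d W (i : 'I_(size server_symbols)) : packet L :=
  coded_sum d W (nth 0 server_symbols i).

Definition mirror_msg k1 d (X : 'I_(size server_symbols) -> packet L) W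
    (i : 'I_(size (mirror_symbols k1))) : packet L :=
  let s := nth 0 (mirror_symbols k1) i in
  if s \in Sm then \sum_(t | (entry t == Some s) && (t.1.1 == k1)) wanted d W t
  else lookup server_symbols X s -
       \sum_(t | (entry t == Some s) && ~~ mirror_keeps k1 t) wanted d W t.

Definition user_decode k1 k2 d (Y : 'I_(size (mirror_symbols k1)) -> packet L)
    W j : packet L :=
  match P k1 j k2 with
  | None => W (d (k1, k2)) j
  | Some s => lookup (mirror_symbols k1) Y s -
      \sum_(t | (entry t == Some s) && mirror_keeps k1 t && (t != (k1, j, k2)))
         wanted d W t
  end.

Arguments mirror_msg : clear implicits.
Arguments user_decode : clear implicits.

Definition hpda_scheme : hscheme K1 K2 N F L :=
  @HScheme K1 K2 N F L (fun k1 => [set p : 'I_N * 'I_F | P0 p.2 k1])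
    (fun k1 k2 => [set p : 'I_N * 'I_F | P k1 p.2 k2 == None])
    (fun _ => size server_symbols) (fun k1 _ => size (mirror_symbols k1))
    server_msg mirror_msg user_decode.

Lemma sum_wanted_agree (Z : {set 'I_N * 'I_F}) (p : pred ('I_K1 * 'I_F * 'I_K2))
    (d : demand K1 K2 N) (W W' : files N F L) :
  agree_on Z W W' -> (forall t, p t -> (d (t.1.1, t.2), t.1.2) \in Z) ->
  \sum_(t | p t) wanted d W t = \sum_(t | p t) wanted d W' t.
Proof. by move=> WW' pZ; apply: eq_bigr => t /pZ /WW'. Qed.

Lemma mirror_symbol_mem k1 (i : 'I_(size (mirror_symbols k1))) :
  nth 0 (mirror_symbols k1) i \in Ss k1.
Proof. by rewrite -[_ \in Ss k1]/(_ \in mirror_symbols k1) mem_nth. Qed.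

Lemma mirror_msgE k1 d W i :
  mirror_msg k1 d (server_msg d W) W i
  = mirror_sum k1 d W (nth 0 (mirror_symbols k1) i).
Proof.
rewrite /mirror_msg /mirror_sum; set s := nth _ _ _.
have sS : s \in Ss k1 := mirror_symbol_mem i.
case: ifP => sSm.
  apply: eq_bigl => t; rewrite /mirror_keeps.
  by case: eqP => //= /(hpda_Sm_subarray sSm sS) ->; rewrite eqxx.
have s_server : s \in server_symbols.
  by rewrite -[_ \in server_symbols]/(_ \in (symbols `\` Sm)%fset) in_fsetD sSm
    (mem_symbols sS).
rewrite (lookup_nth (f := coded_sum d W)) ?fset_uniq // /coded_sum.
by rewrite (bigID (mirror_keeps k1)) /= addrK.
Qed.

Lemma user_decodeE k1 k2 d W j :
  user_decode k1 k2 d (mirror_msg k1 d (server_msg d W) W) W j = W (d (k1, k2)) j.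
Proof.
rewrite /user_decode; case Pj: (P k1 j k2) => [s|//].
rewrite (lookup_nth (f := mirror_sum k1 d W)) ?fset_uniq //; last first.
- by move=> i; rewrite mirror_msgE.
- by rewrite -[_ \in mirror_symbols k1]/(_ \in Ss k1) (hpda_entry_mem Pj).
rewrite /mirror_sum (bigD1 (k1, j, k2)) /=; last by rewrite /entry Pj /mirror_keeps !eqxx.
by rewrite addrK.
Qed.

Lemma mirror_msg_cached k1 d X W W' :
  agree_on [set p : 'I_N * 'I_F | P0 p.2 k1] W W' ->
  mirror_msg k1 d X W = mirror_msg k1 d X W'.
Proof.
have [_ [_ [_ [_ [_ [_ [mirror_caches_Sm _]]]]]]] := hpda.
move=> WW'; apply: functional_extensionality => i; rewrite /mirror_msg.
case: ifP => sSm.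
  apply: sum_wanted_agree WW' _ => -[[k j] k2] /andP [/eqP Pt /eqP /= k_eq].
  by rewrite inE -k_eq (mirror_caches_Sm _ _ _ _ Pt sSm).
congr (_ - _); apply: sum_wanted_agree WW' _ => t /andP [_].
by rewrite inE negb_or negbK => /andP [].
Qed.

Lemma user_decode_cached k1 k2 d Y W W' :
  agree_on [set p : 'I_N * 'I_F | P k1 p.2 k2 == None] W W' ->
  user_decode k1 k2 d Y W = user_decode k1 k2 d Y W'.
Proof.
move=> WW'; apply: functional_extensionality => j; rewrite /user_decode.
case Pj: (P k1 j k2) => [s|]; last by apply: (WW' (_, j)); rewrite inE Pj.
congr (_ - _); apply: sum_wanted_agree WW' _ => -[[k1' j'] k2'].
move=> /andP [/andP [/eqP Pt keeps] ne]; rewrite inE /=.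
by rewrite (hpda_interference_cached Pj Pt keeps ne).
Qed.

Lemma hpda_scheme_valid M1 M2 : (0 < N)%N ->
  M1 / N%:R = Z1%:R / F%:R -> M2 / N%:R = Z2%:R / F%:R ->
  valid_hscheme M1 M2 hpda_scheme.
Proof.
have [[_ _ F_gt0 _ _] [_ [_ [B1 [B2 _]]]]] := hpda.
move=> N_gt0 eqM1 eqM2; split; last split; last split; last split.
- move=> k1; rewrite /= (card_set_snd _ (P0^~ k1)) card_ord B1.
  by rewrite (cache_bits_eq L N_gt0 F_gt0 eqM1).
- move=> k1 k2; have [_ [_ [C1 _]]] := B2 k1.
  rewrite /= (card_set_snd _ (fun j => P k1 j k2 == None)) card_ord C1.
  by rewrite (cache_bits_eq L N_gt0 F_gt0 eqM2).
- exact: mirror_msg_cached.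
- exact: user_decode_cached.
- by move=> d W k1 k2 j; apply: user_decodeE.
Qed.

Lemma hpda_scheme_load1 : (0 < N)%N ->
  load1 hpda_scheme = (#|` symbols|%:R - #|` Sm|%:R) / F%:R.
Proof.
move=> N_gt0; pose d0 : demand K1 K2 N := [ffun _ => Ordinal N_gt0].
rewrite /load1 /= (bigmax_nat_const d0) -/(#|` (symbols `\` Sm)%fset|).
by rewrite (cardfsDS hpda_Sm_subset) natrB // fsubset_leq_card // hpda_Sm_subset.
Qed.

Lemma hpda_scheme_load2 : (0 < N)%N ->
  load2 hpda_scheme = (\max_(k1 < K1) #|` Ss k1|)%N%:R / F%:R.
Proof.
move=> N_gt0; pose d0 : demand K1 K2 N := [ffun _ => Ordinal N_gt0].
by rewrite /load2 /=; under eq_bigr => k1 _ do rewrite (bigmax_nat_const d0).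
Qed.

End HPDAScheme.

Theorem theorem1 (K1 K2 F Z1 Z2 : nat) (Sm : {fset int})
    (Ss : 'I_K1 -> {fset int}) (P0 : 'I_F -> 'I_K1 -> bool)
    (P : 'I_K1 -> 'I_F -> 'I_K2 -> option int) :
  is_HPDA Z1 Z2 Sm Ss P0 P ->
  forall N : nat, (K1 * K2 <= N)%N ->
  forall M1 M2 : rat,
    M1 / N%:R = Z1%:R / F%:R -> M2 / N%:R = Z2%:R / F%:R ->
  forall B : nat, (0 < B)%N -> (F %| B)%N ->
  exists sc : hscheme K1 K2 N F (B %/ F),
    valid_hscheme M1 M2 sc /\
    (forall k1 : 'I_K1, ZM sc k1 = [set p : 'I_N * 'I_F | P0 p.2 k1]) /\
    (forall (k1 : 'I_K1) (k2 : 'I_K2),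
        ZU sc k1 k2 = [set p : 'I_N * 'I_F | P k1 p.2 k2 == None]) /\
    load1 sc = ((#|` (\big[fsetU/fset0]_(k1 < K1) Ss k1)%fset |)%:R
                 - (#|` Sm|)%:R) / F%:R /\
    load2 sc = (\max_(k1 < K1) #|` Ss k1|)%N%:R / F%:R.
Proof.
move=> hpda N K_le_N M1 M2 eqM1 eqM2 B _ _.
have [[K1_gt0 K2_gt0 _ _ _] _] := hpda.
have N_gt0 : (0 < N)%N by apply: leq_trans K_le_N; rewrite muln_gt0 K1_gt0.
exists (hpda_scheme N (B %/ F) Sm Ss P0 P); split.
  exact: (hpda_scheme_valid _ hpda N_gt0 eqM1 eqM2).
split => //; split => //; split.
- exact: (hpda_scheme_load1 _ hpda N_gt0).
- exact: hpda_scheme_load2.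
Qed.
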